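(* Let $G=(V,E)$ be a graph and $k\ge1$ an integer, and let $G_k$ be the graph obtained from $G$ by cloning every vertex exactly $k-1$ times. For a labeling $\mathbf{x}=(x_w)_{w\in V(G_k)}$ by indeterminates define the labeling $\mathbf{X}$ of $G$ by $X_a=(1+x_{a_1})(1+x_{a_2})\cdots(1+x_{a_k})-1$ for $a\in V$. Then $P(G_k;u,\mathbf{x})=P(G;u,\mathbf{X})$.
   Context: All graphs are finite and undirected, without multiple edges but possibly with self loops. For $A\subseteq V$, $G[A]$ is the induced subgraph; $rk(G)$ is the $\mathbb{F}_2$-rank of the adjacency matrix $(m_{ij})$ (with $m_{ij}=1$ iff $\{i,j\}\in E$, so $m_{ii}=1$ iff $i$ has a self loop; empty graph: rank $0$). For indeterminates $x_v$, $x_A=\prod_{v\in A}x_v$ and $P(G;u,\mathbf{x})=\sum_{A\subseteq V}x_Au^{rk(G[A])}$, with $0^0=1$. The graph $G_k$ (''each vertex cloned $k-1$ times'') has vertex set $\{a_i: a\in V,\ 1\le i\le k\}$; for distinct $a,b\in V$, $a_i$ and $b_j$ are adjacent iff $\{a,b\}\in E$; and $a_i,a_j$ are adjacent (for $i=j$: $a_i$ carries a self loop) iff $a$ carries a self loop in $G$. Equivalently, $G_k$ arises by repeatedly applying the single-vertex cloning operation (a new vertex $a'$ joined to all neighbours of $a$ other than $a$, plus the edge $\{a,a'\}$ and a self loop at $a'$ if $a$ has a self loop). *)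

From HB Require Import structures.
From mathcomp Require Import all_boot all_order all_algebra.
Set Implicit Arguments. Unset Strict Implicit. Unset Printing Implicit Defensive.
Import GRing.Theory.
Local Open Scope ring_scope.

(* A graph on a finite vertex type T is a symmetric relation e : rel T;
   e a a = true means a carries a self loop. *)

Definition ind_adjmx (T : finType) (e : rel T) (A : {set T}) : 'M['F_2]_#|A| :=
  \matrix_(i < #|A|, j < #|A|) ((e (enum_val i) (enum_val j))%:R : 'F_2).

Definition rk_ind (T : finType) (e : rel T) (A : {set T}) : nat :=
  \rank (ind_adjmx e A).

Definition interlaceP (R : comNzRingType) (T : finType) (e : rel T)
  (u : R) (x : T -> R) : R :=
  \sum_(A : {set T}) (\prod_(v in A) x v) * u ^+ rk_ind e A.

(* G_k : vertices (a, i) with a in V, i in 'I_k (a_{i+1} in the paper).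
   For a <> b: (a,i) ~ (b,j) iff {a,b} in E;  (a,i) ~ (a,j) (incl. i = j,
   a self loop) iff a has a self loop. *)
Definition clone_rel (T : finType) (k : nat) (e : rel T) : rel (T * 'I_k) :=
  fun p q => if p.1 == q.1 then e p.1 p.1 else e p.1 q.1.

Definition clone_label (R : comNzRingType) (T : finType) (k : nat)
  (x : T * 'I_k -> R) : T -> R :=
  fun a => \prod_(i < k) (1 + x (a, i)) - 1.

From HB Require Import structures.
From mathcomp Require Import all_boot all_order all_algebra.
Set Implicit Arguments. Unset Strict Implicit. Unset Printing Implicit Defensive.
Import GRing.Theory.
Local Open Scope ring_scope.

(* A set B of vertices of G_k is the same thing as a family (B_a)_{a in V} of
   subsets of 'I_k, B_a = { i | a_i in B }.  Two observations give the theorem: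
   - the adjacency of G_k only depends on the first coordinates, so the
     adjacency matrix of G_k[B] is the one of G[pi(B)] with rows and columns
     repeated; hence rk(G_k[B]) = rk(G[A]) where A = pi(B) = {a | B_a <> 0};
   - grouping the families by their support A, the weights x_B add up to
     prod_{a in A} sum_{S <> 0} prod_{i in S} x_{a_i}, and this inner sum is
     (1 + x_{a_1}) ... (1 + x_{a_k}) - 1 = X_a. *)

Section RankOfDuplicatedMatrices.
Variable F : fieldType.

Lemma mxrank_rowsub_surj m n p (f : 'I_n -> 'I_m) (A : 'M[F]_(m, p)) :
  (forall i, exists j, f j = i) -> \rank (rowsub f A) = \rank A.
Proof.
move=> f_surj; apply/eqP; rewrite eqn_leq mxrankS ?rowsub_sub //=.
apply: mxrankS; apply/row_subP => i; have [j <-] := f_surj i.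
by apply/(eq_row_sub j); rewrite row_rowsub.
Qed.

Lemma mxrank_mxsub_surj m n m' n' (f : 'I_m' -> 'I_m) (g : 'I_n' -> 'I_n)
    (A : 'M[F]_(m, n)) :
  (forall i, exists j, f j = i) -> (forall i, exists j, g j = i) ->
  \rank (mxsub f g A) = \rank A.
Proof.
move=> f_surj g_surj; rewrite mxsubcr -mxrank_tr trmx_mxsub.
by rewrite mxrank_rowsub_surj // mxrank_tr mxrank_rowsub_surj.
Qed.

End RankOfDuplicatedMatrices.

Lemma rk_ind_set0 (T : finType) (e : rel T) : rk_ind e set0 = 0%N.
Proof.
by apply/eqP; rewrite -leqn0 -(cards0 T); apply: rank_leq_row.
Qed.

(* If e' is the pull-back of e along phi, the induced subgraph e'[B] is
   e[phi(B)] with vertices duplicated, so both have the same rank. *)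
Lemma rk_ind_pullback (S T : finType) (phi : S -> T) (e : rel T) (e' : rel S)
    (B : {set S}) :
  (forall p q, e' p q = e (phi p) (phi q)) -> rk_ind e' B = rk_ind e (phi @: B).
Proof.
move=> e'E; have [->|[p0 p0B]] := set_0Vmem B; first by rewrite imset0 !rk_ind_set0.
have a0 : phi p0 \in phi @: B by apply: imset_f.
pose h (i : 'I_#|B|) := enum_rank_in a0 (phi (enum_val i)).
have h_surj j : exists i, h i = j.
  have /imsetP[p pB phipE] := enum_valP j.
  by exists (enum_rank_in p0B p); rewrite /h enum_rankK_in // -phipE enum_valK_in.
rewrite /rk_ind -(mxrank_mxsub_surj (ind_adjmx e _) h_surj h_surj).
congr (\rank _); apply/matrixP => i j.
by rewrite !mxE e'E /h !enum_rankK_in //; apply: imset_f; apply: enum_valP.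
Qed.

Lemma clone_relE (T : finType) (k : nat) (e : rel T) (p q : T * 'I_k) :
  clone_rel e p q = e p.1 q.1.
Proof. by rewrite /clone_rel; case: eqP => [->|]. Qed.

Section FamiliesOfSets.
Variables (T I : finType).

Definition family_support (f : {ffun T -> {set I}}) : {set T} :=
  [set a | f a != set0].

Lemma sum_families_with_support (R : comNzRingType) (W : T -> {set I} -> R)
    (A : {set T}) :
  \sum_(f | family_support f == A) \prod_(a in A) W a (f a) =
  \prod_(a in A) \sum_(S : {set I} | S != set0) W a S.
Proof.
rewrite (big_distr_big set0); apply: eq_bigl => f /=.
apply/eqP/familyP => [<- a | f_fam].
  by case: ifPn; rewrite !inE /= ?negbK.
apply/setP => a; rewrite inE; have := f_fam a.
by case: ifPn => _ //= /eqP ->; rewrite eqxx.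
Qed.

End FamiliesOfSets.

Lemma prod_1D_sub1 (R : comNzRingType) (I : finType) (y : I -> R) :
  \prod_i (1 + y i) - 1 = \sum_(S : {set I} | S != set0) \prod_(i in S) y i.
Proof.
under eq_bigr do rewrite addrC.
rewrite bigA_distr (bigD1 set0) //= big1 => [|i _]; last by rewrite in_set0.
by rewrite addrC addKr; apply: eq_bigr => S _; rewrite [RHS]big_mkcond.
Qed.

Section ClonedVertexSets.
Variables (T : finType) (k : nat).

Definition clone_set (f : {ffun T -> {set 'I_k}}) : {set T * 'I_k} :=
  [set p | p.2 \in f p.1].

Definition clone_family (B : {set T * 'I_k}) : {ffun T -> {set 'I_k}} :=
  [ffun a => [set i | (a, i) \in B]].

Lemma clone_setK : cancel clone_set clone_family.
Proof.
by move=> f; apply/ffunP => a; rewrite ffunE; apply/setP => i; rewrite !inE.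
Qed.

Lemma clone_familyK : cancel clone_family clone_set.
Proof. by move=> B; apply/setP => -[a i]; rewrite !inE ffunE inE. Qed.

Lemma proj_clone_set (f : {ffun T -> {set 'I_k}}) :
  [set p.1 | p in clone_set f] = family_support f.
Proof.
apply/setP => a; rewrite inE; apply/imsetP/set0Pn.
  by case=> -[b i]; rewrite inE /= => i_fb ->; exists i.
by case=> i i_fa; exists (a, i); rewrite ?inE.
Qed.

Lemma prod_clone_set (R : comNzRingType) (x : T * 'I_k -> R)
    (f : {ffun T -> {set 'I_k}}) :
  \prod_(p in clone_set f) x p =
  \prod_(a in family_support f) \prod_(i in f a) x (a, i).
Proof.
transitivity (\prod_a \prod_(i in f a) x (a, i)).
  by rewrite pair_big_dep; apply: eq_big => -[a i] //; rewrite inE.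
rewrite [LHS](bigID (mem (family_support f))) /= [X in _ * X]big1 ?mulr1 // => a.
by rewrite inE negbK => /eqP ->; rewrite big_set0.
Qed.

End ClonedVertexSets.

Theorem mainTheorem3 (R : comNzRingType) (T : finType) (e : rel T)
  (e_sym : symmetric e) (k : nat) (k_pos : (0 < k)%N)
  (u : R) (x : T * 'I_k -> R) :
  interlaceP (@clone_rel T k e) u x = interlaceP e u (clone_label x).
Proof.
(* Sum over families f instead of sets of clones, then group by support. *)
rewrite /interlaceP (reindex (@clone_set T k)); last first.
  by exists (@clone_family T k) => B _; rewrite ?clone_setK ?clone_familyK.
under eq_bigr => f _ do rewrite prod_clone_set
  (rk_ind_pullback (phi := fst) _ (@clone_relE T k e)) proj_clone_set.
rewrite (partition_big (@family_support T _) predT) //=.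
apply: eq_bigr => A _.
pose W a (S : {set 'I_k}) := \prod_(i in S) x (a, i).
rewrite (eq_bigr (fun f : {ffun T -> _} => (\prod_(a in A) W a (f a)) * u ^+ rk_ind e A));
  last by move=> f /eqP ->.
rewrite -mulr_suml sum_families_with_support; congr (_ * _).
by apply: eq_bigr => a _; rewrite /clone_label prod_1D_sub1.
Qed.
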